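(* An endomorphism $\varphi$ of a periodic abelian group $A$ is inertial (resp. left-inertial) if and only if its restriction to every primary component $A_p$ of $A$ is inertial (resp. left-inertial) and it acts as a multiplication (resp. an invertible multiplication) on all but finitely many of the primary components $A_p$.
   Context: Abelian groups are written additively. An endomorphism $\varphi$ of $A$ is inertial if $(\varphi(X)+X)/X$ is finite for every subgroup $X\le A$, and left-inertial if $X/(X\cap\varphi(X))$ is finite for every $X\le A$. A multiplication of an abelian $p$-group is the natural action of a $p$-adic integer; it is invertible if it is bijective. Primary components are invariant under every endomorphism. *)

From HB Require Import structures.
From mathcomp Require Import all_boot all_algebra.
Set Implicit Arguments. Unset Strict Implicit. Unset Printing Implicit Defensive.
Import GRing.Theory.
Local Open Scope ring_scope.

Definition is_subgroup (A : zmodType) (X : A -> Prop) : Prop :=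
  X 0 /\ (forall x y, X x -> X y -> X (x - y)).

(* For H <= K, "K/H is finite": finitely many cosets of H cover K. *)
Definition fin_quot (A : zmodType) (K H : A -> Prop) : Prop :=
  exists s : seq A, forall k, K k -> exists2 y, y \in s & H (k - y).

Definition img (A : zmodType) (f : A -> A) (X : A -> Prop) : A -> Prop :=
  fun b => exists2 a, X a & b = f a.

Definition sumg (A : zmodType) (X Y : A -> Prop) : A -> Prop :=
  fun b => exists a, exists c, [/\ X a, Y c & b = a + c].

Definition capg (A : zmodType) (X Y : A -> Prop) : A -> Prop :=
  fun b => X b /\ Y b.

Definition inertial_on (A : zmodType) (B : A -> Prop) (f : A -> A) : Prop :=
  forall X : A -> Prop, is_subgroup X -> (forall x, X x -> B x) ->
    fin_quot (sumg (img f X) X) X.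

Definition left_inertial_on (A : zmodType) (B : A -> Prop) (f : A -> A) : Prop :=
  forall X : A -> Prop, is_subgroup X -> (forall x, X x -> B x) ->
    fin_quot X (capg X (img f X)).

Definition whole (A : zmodType) : A -> Prop := fun _ => True.

Definition inertial (A : zmodType) (f : A -> A) := inertial_on (@whole A) f.
Definition left_inertial (A : zmodType) (f : A -> A) :=
  left_inertial_on (@whole A) f.

Definition periodic (A : zmodType) : Prop :=
  forall a : A, exists2 n : nat, (0 < n)%N & a *+ n = 0.

Definition primary (A : zmodType) (p : nat) : A -> Prop :=
  fun a => exists k : nat, a *+ (p ^ k) = 0.

(* p-adic integers as compatible sequences of residues mod p^k. *)
Definition padic_seq (p : nat) (c : nat -> nat) : Prop :=
  forall k : nat, c k.+1 = c k %[mod p ^ k].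

Definition acts_as_padic (A : zmodType) (p : nat) (c : nat -> nat)
    (f : A -> A) : Prop :=
  forall (a : A) (k : nat), a *+ (p ^ k) = 0 -> f a = a *+ c k.

Definition mult_on (A : zmodType) (p : nat) (f : A -> A) : Prop :=
  exists c, padic_seq p c /\ acts_as_padic p c f.

Definition inv_mult_on (A : zmodType) (p : nat) (f : A -> A) : Prop :=
  exists c, [/\ padic_seq p c, acts_as_padic p c f,
    (forall a b, primary p a -> primary p b -> f a = f b -> a = b) &
    (forall b, primary p b -> exists2 a, primary p a & f a = b)].

Definition cofinitely_many_primes (P : nat -> Prop) : Prop :=
  exists s : seq nat, forall p, prime p -> p \notin s -> P p.

(* If phi is a multiplication on A_p, it maps X \cap A_p into X for every subgroup
   X. Splitting elements of the periodic group A into primary components, only the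
   finitely many primes where phi is not a multiplication contribute to
   (phi(X) + X)/X, each with finitely many cosets by inertia on A_p; likewise for
   X/(X \cap phi(X)) with invertible multiplications.
   Conversely, if on infinitely many A_p some a_p is not mapped into <a_p> (resp.
   not in phi(<a_p>)), the subgroup generated by all the a_p contains infinitely
   many phi(a_p) (resp. a_p) in pairwise distinct cosets: projecting to A_p, which
   kills every other generator, would otherwise put phi(a_p) in <a_p>.
   Finally, an endomorphism of an abelian p-group mapping every x into <x> acts on
   each A[p^k] as multiplication by its value on an element of maximal order, and
   these integers form a p-adic integer. *)

From HB Require Import structures.
From mathcomp Require Import all_boot all_algebra.
From mathcomp Require Import ring zify.
From Stdlib Require Import Classical ClassicalEpsilon.
Set Implicit Arguments. Unset Strict Implicit. Unset Printing Implicit Defensive.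
Import GRing.Theory.
Local Open Scope ring_scope.

Section IntegerMultiples.
Variable A : zmodType.
Implicit Types (x : A) (z : int).

Lemma mulrn_eq0_dvd x (d N : nat) : x *+ d = 0 -> (d %| N)%N -> x *+ N = 0.
Proof. by move=> hx /dvdnP [e ->]; rewrite mulnC mulrnA hx mul0rn. Qed.

Lemma mulrz_eq0_dvd x (N : nat) z : x *+ N = 0 -> (N%:Z %| z)%Z -> x *~ z = 0.
Proof.
move=> hN /dvdzP [q ->]; rewrite mulrC mulrzA -pmulrn hN; exact: mul0rz.
Qed.

Lemma mulrz_mulrn_eq0 x (N : nat) z : x *+ N = 0 -> (x *~ z) *+ N = 0.
Proof. by move=> hx; rewrite pmulrn -mulrzA mulrC mulrzA -pmulrn hx mul0rz. Qed.

Lemma mulrz_as_mulrn x (N : nat) z : (0 < N)%N -> x *+ N = 0 ->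
  exists m : nat, x *~ z = x *+ m.
Proof.
move=> N_gt0 hx; exists `|(z %% N)%Z|%N.
rewrite pmulrn gez0_abs ?modz_ge0 ?eqz_nat -?lt0n //.
apply/eqP; rewrite -subr_eq0 -mulrzBr; apply/eqP; apply: (mulrz_eq0_dvd hx).
by apply/dvdzP; exists (z %/ N)%Z; rewrite {1}(divz_eq z N) addrK.
Qed.

Lemma mulrz_coprime_inv x (N : nat) c : coprimez c N -> x *+ N = 0 ->
  exists u : int, (x *~ c) *~ u = x.
Proof.
move=> cop hx; case: (Bezoutz c N) => u [v huv].
have g1 : gcdz c N = 1 by move/eqP: cop.
exists u; rewrite -mulrzA.
have -> : c * u = 1 - v * N by rewrite -g1 -huv mulrC addrK.
rewrite mulrzBr mulrC mulrzA -pmulrn hx mul0rz subr0; exact: mulr1z.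
Qed.

Lemma mulrn_coprime_inv x (N c : nat) : coprime c N -> x *+ N = 0 ->
  exists u : int, (x *+ c) *~ u = x.
Proof.
by move=> cop hx; rewrite pmulrn; apply: mulrz_coprime_inv hx; rewrite coprimezE.
Qed.

Lemma mulrn_coprime_split x (a b : nat) : coprime a b -> x *+ (a * b) = 0 ->
  exists z1 z2, [/\ x = x *~ z1 + x *~ z2, (x *~ z1) *+ a = 0 & (x *~ z2) *+ b = 0].
Proof.
move=> cab hx; case: (Bezoutz a b) => u [v huv].
have g1 : gcdz a b = 1 by rewrite /gcdz /=; move/eqP: cab => ->.
exists (v * b), (u * a); split.
- by rewrite -mulrzDr addrC huv g1.
- rewrite pmulrn -mulrzA; apply: (mulrz_eq0_dvd hx).
  by apply/dvdzP; exists v; rewrite PoszM; ring.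
- rewrite pmulrn -mulrzA; apply: (mulrz_eq0_dvd hx).
  by apply/dvdzP; exists u; rewrite PoszM; ring.
Qed.

Lemma mulrn_primary_split x (p n : nat) : (0 < n)%N -> x *+ n = 0 ->
  exists z1 z2, [/\ x = x *~ z1 + x *~ z2, (x *~ z1) *+ n`_p = 0
                  & (x *~ z2) *+ n`_p^' = 0].
Proof.
move=> n_gt0 hx; apply: mulrn_coprime_split; first exact: coprime_partC.
by rewrite partnC.
Qed.

(* The hypotheses [x *+ p ^ n = 0] and [x *+ p ^ n.-1 != 0] say that [x] has order
   exactly [p ^ n]; this pattern recurs below. *)
Lemma pexp_dvd_of_mulrz_eq0 (p n : nat) x z : prime p ->
  x *+ p ^ n = 0 -> x *+ p ^ n.-1 != 0 -> x *~ z = 0 -> ((p ^ n)%:Z %| z)%Z.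
Proof.
move=> p_pr hn hn1 hz.
have hg : x *~ (gcdn `|z| (p ^ n))%:Z = 0.
  case: (Bezoutz z (p ^ n)%N) => u [v]; rewrite /gcdz /= => <-.
  by rewrite mulrzDr (mulrC u) (mulrC v) !mulrzA hz -pmulrn hn !mul0rz addr0.
have [i i_le_n hi] := dvdn_pfactor _ _ p_pr (dvdn_gcdr `|z|%N (p ^ n)).
have i_eq_n : i = n.
  apply/eqP; rewrite eqn_leq i_le_n leqNgt; apply/negP => i_lt_n; move: hn1.
  rewrite -(subnKC (_ : i <= n.-1)%N) ?expnD ?mulrnA; last by lia.
  by rewrite -hi [x *+ _]pmulrn hg mul0rn eqxx.
by rewrite dvdzE /= -i_eq_n -hi; exact: dvdn_gcdl.
Qed.

Lemma exists_exact_pexp p x : primary p x -> x != 0 ->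
  exists r, [/\ (0 < r)%N, x *+ p ^ r = 0 & x *+ p ^ r.-1 != 0].
Proof.
move=> [k hk] x0.
have ex : exists r, x *+ p ^ r == 0 by exists k; apply/eqP.
case: (ex_minnP ex) => r /eqP hr hmin.
have r_gt0 : (0 < r)%N.
  by rewrite lt0n; apply: contraNneq x0 => r0; rewrite -hr r0 expn0 mulr1n.
exists r; split => //; apply/negP => /eqP h.
by have := hmin _ (introT eqP h); rewrite leqNgt prednK // leqnn.
Qed.

End IntegerMultiples.

Section Subgroups.
Variable A : zmodType.
Implicit Types (X Y : A -> Prop) (x y : A).

Lemma subgroup0 X : is_subgroup X -> X 0.
Proof. by case. Qed.

Lemma subgroupB X x y : is_subgroup X -> X x -> X y -> X (x - y).
Proof. by case=> _; apply. Qed.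

Lemma subgroupN X x : is_subgroup X -> X x -> X (- x).
Proof. by move=> hX hx; rewrite -sub0r; apply: subgroupB (subgroup0 hX) hx. Qed.

Lemma subgroupD X x y : is_subgroup X -> X x -> X y -> X (x + y).
Proof.
by move=> hX hx hy; rewrite -[y]opprK; apply: subgroupB (subgroupN hX hy).
Qed.

Lemma subgroupMn X x n : is_subgroup X -> X x -> X (x *+ n).
Proof.
move=> hX hx; elim: n => [|n IH]; first by rewrite mulr0n; apply: subgroup0.
by rewrite mulrS; apply: subgroupD.
Qed.

Lemma subgroupMz X x z : is_subgroup X -> X x -> X (x *~ z).
Proof.
move=> hX hx; case: z => n; first by rewrite -pmulrn; apply: subgroupMn.
by rewrite NegzE mulrNz -pmulrn; apply: subgroupN => //; apply: subgroupMn.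
Qed.

Lemma img_subgroup (f : {additive A -> A}) X :
  is_subgroup X -> is_subgroup (img f X).
Proof.
move=> hX; split; first by exists 0; [apply: subgroup0 | rewrite raddf0].
move=> _ _ [x hx ->] [y hy ->]; exists (x - y); first exact: subgroupB.
by rewrite raddfB.
Qed.

Lemma capg_subgroup X Y : is_subgroup X -> is_subgroup Y -> is_subgroup (capg X Y).
Proof.
move=> hX hY; split; first by split; apply: subgroup0.
by move=> x y [hx1 hx2] [hy1 hy2]; split; apply: subgroupB.
Qed.

Lemma primary_subgroup (p : nat) : is_subgroup (@primary A p).
Proof.
split; first by exists 0%N; rewrite mul0rn.
move=> x y [k hk] [l hl]; exists (k + l)%N.
by rewrite mulrnBl expnD mulrnA hk mul0rn mulnC mulrnA hl mul0rn subr0.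
Qed.

Lemma primaryMz (p : nat) x z : primary p x -> primary p (x *~ z).
Proof. by move=> [k hk]; exists k; apply: mulrz_mulrn_eq0. Qed.

Lemma primary_part (p n : nat) x : x *+ n`_p = 0 -> primary p x.
Proof. by exists (logn p n); rewrite -p_part. Qed.

Lemma fin_quotS (K K' H H' : A -> Prop) : (forall k, K' k -> K k) ->
  (forall h, H h -> H' h) -> fin_quot K H -> fin_quot K' H'.
Proof.
move=> sK sH [s hs]; exists s => k /sK /hs [y ys hy].
by exists y => //; apply: sH.
Qed.

Lemma fin_quot_sumg (K X : A -> Prop) : is_subgroup X ->
  fin_quot (sumg K X) X <-> fin_quot K X.
Proof.
move=> hX; split=> [|[s hs]].
  apply: fin_quotS => // k Kk; exists k, 0; split; rewrite ?addr0 //.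
  exact: subgroup0.
exists s => _ [k [x [Kk Xx ->]]]; have [y ys hy] := hs k Kk.
by exists y => //; rewrite addrAC; apply: subgroupD.
Qed.

End Subgroups.

Section FiniteIndexFromPrimaryComponents.
Variables (A : zmodType) (F : {additive A -> A}).
Variables (X H : A -> Prop) (good : nat -> Prop).
Hypotheses (subX : is_subgroup X) (subH : is_subgroup H).
Hypothesis F_good : forall p x, prime p -> good p -> primary p x -> X x -> H (F x).
Hypothesis F_primary : forall p, prime p -> fin_quot (img F (capg X (primary p))) H.

Lemma image_of_good_order n x : (0 < n)%N ->
  (forall q, prime q -> (q %| n)%N -> good q) -> x *+ n = 0 -> X x -> H (F x).
Proof.
elim/ltn_ind: n x => n IH x n_gt0 n_good xn Xx.
have [n_gt1|n_le1] := ltnP 1 n; last first.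
  move: xn; rewrite (_ : n = 1)%N ?mulr1n => [->|]; last by lia.
  by rewrite raddf0; apply: subgroup0.
pose p := pdiv n; have p_pr : prime p := pdiv_prime n_gt1.
have p_dvd_n : (p %| n)%N := pdiv_dvd n.
have [z1 [z2 [ex x1 x2]]] := mulrn_primary_split p n_gt0 xn.
rewrite ex raddfD; apply: subgroupD => //.
  apply: (F_good p_pr (n_good _ p_pr p_dvd_n)); first exact: primary_part x1.
  exact: subgroupMz.
apply: (IH _ _ _ (part_gt0 _ _) _ x2); last exact: subgroupMz.
- rewrite -{2}(partnC p n_gt0) ltn_Pmull ?part_gt0 //.
  by rewrite p_part_gt1 mem_primes p_pr n_gt0 p_dvd_n.
- by move=> q q_pr q_dvd; apply: n_good (dvdn_trans q_dvd (dvdn_part _ _)).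
Qed.

Lemma fin_quot_order_primes (s : seq nat) : exists s0 : seq A,
  forall x n, (0 < n)%N -> x *+ n = 0 -> X x ->
    (forall q, prime q -> (q %| n)%N -> q \in s \/ good q) ->
  exists2 y, y \in s0 & H (F x - y).
Proof.
elim: s => [|p s [s0 hs0]].
  exists [:: 0] => x n n_gt0 xn Xx n_good; exists 0; rewrite ?inE // subr0.
  by apply: (image_of_good_order n_gt0) => // q q_pr /(n_good q q_pr) [].
have [p_pr|p_npr] := boolP (prime p); last first.
  exists s0 => x n n_gt0 xn Xx n_good.
  apply: (hs0 _ _ n_gt0 xn Xx) => q q_pr q_dvd.
  case: (n_good q q_pr q_dvd) => [|]; last by right.
  by rewrite inE => /predU1P [q_eq_p|]; [rewrite -q_eq_p q_pr in p_npr | left].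
have [t ht] := F_primary p_pr.
exists [seq y1 + y2 | y1 <- t, y2 <- s0] => x n n_gt0 xn Xx n_good.
have [z1 [z2 [ex x1 x2]]] := mulrn_primary_split p n_gt0 xn.
have [y1 y1t hy1] : exists2 y1, y1 \in t & H (F (x *~ z1) - y1).
  apply: ht; exists (x *~ z1) => //; split; first exact: subgroupMz.
  exact: primary_part x1.
have [y2 y2s hy2] : exists2 y2, y2 \in s0 & H (F (x *~ z2) - y2).
  apply: (hs0 _ _ (part_gt0 _ _) x2); first exact: subgroupMz.
  move=> q q_pr q_dvd; have q_dvd_n := dvdn_trans q_dvd (dvdn_part p^' n).
  case: (n_good q q_pr q_dvd_n) => [|]; last by right.
  rewrite inE => /predU1P [q_eq_p|]; last by left.
  have : q \in (p : nat_pred)^'.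
    by apply: (pnatPpi (part_pnat _ n)); rewrite mem_primes q_pr part_gt0.
  by rewrite !inE q_eq_p eqxx.
exists (y1 + y2); first exact: allpairs_f.
by rewrite {1}ex raddfD opprD addrACA; apply: subgroupD.
Qed.

Lemma fin_quot_img_of_primary : periodic A -> cofinitely_many_primes good ->
  fin_quot (img F X) H.
Proof.
move=> hA [s hs]; have [s0 hs0] := fin_quot_order_primes s.
exists s0 => _ [x Xx ->]; have [n n_gt0 xn] := hA x.
apply: hs0 xn Xx _ => // q q_pr _.
by have [|q_ns] := boolP (q \in s); [left | right; apply: hs].
Qed.

End FiniteIndexFromPrimaryComponents.

Definition power_on (A : zmodType) (p : nat) (f : A -> A) : Prop :=
  forall x, primary p x -> exists z : int, f x = x *~ z.

Definition invertible_power_on (A : zmodType) (p : nat) (f : A -> A) : Prop :=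
  forall x, primary p x -> exists z : int, f (x *~ z) = x.

Definition mulrn_fun (A : zmodType) (m : nat) : A -> A := fun x => x *+ m.

Fact mulrn_fun_is_zmod_morphism (A : zmodType) m : zmod_morphism (@mulrn_fun A m).
Proof. by move=> x y; rewrite /mulrn_fun mulrnBl. Qed.

HB.instance Definition _ (A : zmodType) m :=
  GRing.isZmodMorphism.Build A A (@mulrn_fun A m) (mulrn_fun_is_zmod_morphism m).

Section PowerEndomorphisms.
Variables (A : zmodType) (p : nat).
Hypothesis p_pr : prime p.
Implicit Types (g phi : {additive A -> A}) (a b v w x y : A).

Lemma power_on_step g y l : power_on p g ->
  y *+ p ^ l.+1 = 0 -> y *+ p ^ l != 0 -> g (y *+ p) = 0 ->
  exists t : int, g y = (y *+ p ^ l) *~ t.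
Proof.
move=> g_pow hy hy1 gyp; have [t ht] := g_pow y (ex_intro _ l.+1 hy).
have : y *~ (t * p%:Z) = 0 by rewrite mulrzA -ht -pmulrn -raddfMn.
move/(pexp_dvd_of_mulrz_eq0 p_pr hy); rewrite /= hy1 => /(_ isT).
rewrite expnSr PoszM dvdz_mul2r; last by rewrite eqz_nat -lt0n prime_gt0.
by case/dvdzP => q eq; exists q; rewrite ht eq pmulrn -mulrzA mulrC.
Qed.

Lemma order_p_independent w v (alpha beta : int) : w *+ p = 0 -> v *+ p = 0 ->
  v != 0 -> ~ (exists e : int, w = v *~ e) -> w *~ alpha = v *~ beta ->
  (p%:Z %| alpha)%Z /\ (p%:Z %| beta)%Z.
Proof.
move=> wp vp v_neq0 w_notin hwv.
have p_dvd_alpha : (p%:Z %| alpha)%Z.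
  apply/negPn/negP => p_ndvd; have cop : coprimez alpha p.
    by rewrite coprimezE coprime_sym prime_coprime // -dvdzE.
  have [u hu] := mulrz_coprime_inv cop wp.
  by apply: w_notin; exists (beta * u); rewrite -{1}hu hwv mulrzA.
split=> //; have vb : v *~ beta = 0 by rewrite -hwv (mulrz_eq0_dvd wp).
have := pexp_dvd_of_mulrz_eq0 (n := 1) (x := v) (z := beta) p_pr.
by rewrite /= expn1 expn0 mulr1n; apply.
Qed.

(* Either [p ^ l b] is a multiple of [p ^ j.-1 a], and correcting [b] by a multiple
   of [a] lands in [A[p ^ l]], or the two are independent and comparing the power
   relations of [b] and of [c = p ^ (j - l.+1) a + b] forces [g b = 0]. *)
Lemma power_kernel_step g a j l : power_on p g ->
  a *+ p ^ j = 0 -> a *+ p ^ j.-1 != 0 -> g a = 0 -> (l < j)%N ->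
  (forall b, b *+ p ^ l = 0 -> g b = 0) -> forall b, b *+ p ^ l.+1 = 0 -> g b = 0.
Proof.
move=> g_pow ha ha1 ga l_lt_j IH b hb.
have [|w_neq0] := eqVneq (b *+ p ^ l) 0; first exact: IH.
have IHp y : y *+ p ^ l.+1 = 0 -> g (y *+ p) = 0.
  by move=> hy; apply: IH; rewrite -mulrnA -expnS.
have [t ht] := power_on_step g_pow hb w_neq0 (IHp _ hb).
set w := b *+ p ^ l in w_neq0 ht; set v := a *+ p ^ j.-1 in ha1.
have wp : w *+ p = 0 by rewrite -mulrnA -expnSr.
have vp : v *+ p = 0 by rewrite -mulrnA -expnSr prednK // (leq_ltn_trans _ l_lt_j).
pose c := a *+ p ^ (j - l.+1) + b.
have cl : c *+ p ^ l = v + w.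
  by rewrite mulrnDl -mulrnA -expnD; congr (a *+ p ^ _ + _); lia.
have hc : c *+ p ^ l.+1 = 0 by rewrite expnSr mulrnA cl mulrnDl vp wp addr0.
have gc : g c = g b by rewrite raddfD raddfMn ga mul0rn add0r.
have [c0|c_neq0] := eqVneq (c *+ p ^ l) 0; first by rewrite -gc; apply: IH.
have [r hr] := power_on_step g_pow hc c_neq0 (IHp _ hc).
rewrite cl gc ht in hr.
have [[e we]|w_notin] := classic (exists e : int, w = v *~ e).
  suff : g (b - a *~ (e * (p ^ (j - l.+1))%:Z)) = 0.
    by rewrite raddfB raddfMz ga mul0rz subr0.
  apply: IH; rewrite mulrnBl -/w we pmulrn -mulrzA -mulrA -PoszM -expnD.
  rewrite (_ : j - l.+1 + l = j.-1)%N; last lia.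
  by rewrite /v pmulrn [e * _]mulrC mulrzA subrr.
have hwv : w *~ (t - r) = v *~ r by rewrite mulrzBr hr mulrzDl addrK.
have [p_dvd_tr p_dvd_r] := order_p_independent wp vp ha1 w_notin hwv.
by rewrite ht -(subrK r t) mulrzDr !(mulrz_eq0_dvd wp) // addr0.
Qed.

Lemma power_kernel g a j : power_on p g ->
  a *+ p ^ j = 0 -> a *+ p ^ j.-1 != 0 -> g a = 0 ->
  forall b, b *+ p ^ j = 0 -> g b = 0.
Proof.
move=> g_pow ha ha1 ga.
suff : forall l, (l <= j)%N -> forall b, b *+ p ^ l = 0 -> g b = 0 by apply.
elim=> [|l IH] l_le_j b hb.
  by move: hb; rewrite expn0 mulr1n => ->; rewrite raddf0.
exact: power_kernel_step g_pow ha ha1 ga l_le_j (IH (ltnW l_le_j)) b hb.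
Qed.

Lemma pexp_exponent k : exists j, (forall a, a *+ p ^ k = 0 -> a *+ p ^ j = 0) /\
  (j = 0%N \/ exists a, a *+ p ^ j = 0 /\ a *+ p ^ j.-1 != 0).
Proof.
elim: k => [|k [j [hj hj2]]]; first by exists 0%N; split=> //; left.
have [[a [ha ha1]]|none] :=
  classic (exists a, a *+ p ^ k.+1 = 0 /\ a *+ p ^ k != 0).
  by exists k.+1; split=> //; right; exists a.
exists j; split=> // a ha; apply: hj; apply: NNPP => ak; apply: none.
by exists a; split=> //; apply/eqP.
Qed.

Lemma power_on_level phi k : power_on p phi ->
  exists m : nat, forall a, a *+ p ^ k = 0 -> phi a = a *+ m.
Proof.
move=> phi_pow; have [j [kj [j0|[a [ha ha1]]]]] := pexp_exponent k.
  by exists 0%N => a /kj; rewrite j0 expn0 mulr1n => ->; rewrite raddf0 mulr0n.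
have [z hz] := phi_pow a (ex_intro _ j ha).
have pj_gt0 : (0 < p ^ j)%N by rewrite expn_gt0 prime_gt0.
have [m hm] := mulrz_as_mulrn z pj_gt0 ha.
exists m => b /kj hb.
have g_pow : power_on p (phi \- mulrn_fun m).
  move=> x px; have [z' hz'] := phi_pow x px; exists (z' - m%:Z).
  by rewrite /= /mulrn_fun hz' mulrzBr -pmulrn.
have ga : (phi \- mulrn_fun m) a = 0 by rewrite /= /mulrn_fun hz hm subrr.
apply/eqP; rewrite -subr_eq0; apply/eqP.
exact: power_kernel g_pow ha ha1 ga b hb.
Qed.

Lemma unbounded_exact_pexp :
  ~ (exists e, forall a, primary p a -> a *+ p ^ e = 0) ->
  forall k, exists b, b *+ p ^ k.+1 = 0 /\ b *+ p ^ k != 0.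
Proof.
move=> unbounded k; have [a [pa ak]] : exists a, primary p a /\ a *+ p ^ k != 0.
  apply: NNPP => none; apply: unbounded; exists k => a pa.
  by apply: NNPP => ak; apply: none; exists a; split=> //; apply/eqP.
have a_neq0 : a != 0 by apply: contraNneq ak => ->; rewrite mul0rn.
have [r [r_gt0 hr hr1]] := exists_exact_pexp pa a_neq0.
have k_lt_r : (k < r)%N.
  rewrite ltnNge; apply: contraNN ak => r_le_k.
  by rewrite -(subnK r_le_k) expnD mulnC mulrnA hr mul0rn.
exists (a *+ p ^ (r - k.+1)); rewrite -!mulrnA -!expnD subnK //.
by rewrite (_ : r - k.+1 + k = r.-1)%N //; lia.
Qed.

Lemma mult_on_of_power_on phi : power_on p phi -> mult_on p phi.
Proof.
move=> phi_pow; have level k := power_on_level k phi_pow.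
(* With a bounded exponent the levels above it are arbitrary and need not be
   compatible, so a constant sequence is used instead. *)
have [[e he]|unbounded] :=
  classic (exists e, forall a, primary p a -> a *+ p ^ e = 0).
  have [m hm] := level e; exists (fun=> m); split=> // a k hk.
  by apply/hm/he; exists k.
have [c hc] := choice _ level.
exists c; split=> [[|k]|]; [by rewrite !modn1 | | by move=> a k; apply: hc].
have [b [hb hb1]] := unbounded_exact_pexp unbounded k.
have hb2 : b *+ p ^ k.+2 = 0 by rewrite expnS mulnC mulrnA hb mul0rn.
have : b *~ ((c k.+2)%:Z - (c k.+1)%:Z) = 0.
  by rewrite mulrzBr -!pmulrn -(hc _ _ hb) -(hc _ _ hb2) subrr.
move/(pexp_dvd_of_mulrz_eq0 p_pr hb hb1); rewrite -eqz_mod_dvd !modz_nat.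
by move=> /eqP [].
Qed.

Lemma power_on_of_invertible_power_on phi :
  invertible_power_on p phi -> power_on p phi.
Proof.
move=> phi_inv x px; have [->|x_neq0] := eqVneq x 0.
  by exists 0; rewrite raddf0 mul0rz.
have [r [r_gt0 hr hr1]] := exists_exact_pexp px x_neq0.
have [k hk] := phi_inv x px; rewrite raddfMz in hk.
have hpr : phi x *+ p ^ r = 0 by rewrite -raddfMn hr raddf0.
have cop : coprimez k (p ^ r)%N.
  rewrite coprimezE /= coprime_pexpr // coprime_sym prime_coprime //.
  apply/negP => p_dvd_k; have /dvdzP [q kq] : (p%:Z %| k)%Z by rewrite dvdzE.
  move: hr1; rewrite -hk pmulrn -mulrzA (mulrz_eq0_dvd hpr) ?eqxx //.
  apply/dvdzP; exists q; rewrite kq -(prednK r_gt0) expnS /= !PoszM; ring.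
have [u hu] := mulrz_coprime_inv cop hpr.
by exists u; rewrite -{1}hu hk.
Qed.

Lemma inv_mult_on_of_invertible_power_on phi :
  invertible_power_on p phi -> inv_mult_on p phi.
Proof.
move=> phi_inv.
have [c [c_padic c_act]] :=
  mult_on_of_power_on (power_on_of_invertible_power_on phi_inv).
exists c; split=> // [a b pa pb eab|b pb].
  apply/eqP; rewrite -subr_eq0; apply/eqP.
  have [k <-] := phi_inv _ ((primary_subgroup A p).2 _ _ pa pb).
  by rewrite raddfMz raddfB eab subrr mul0rz.
by have [k hk] := phi_inv _ pb; exists (b *~ k) => //; apply: primaryMz.
Qed.

Lemma invertible_power_on_of_inv_mult phi :
  inv_mult_on p phi -> invertible_power_on p phi.
Proof.
move=> [c [_ c_act c_inj c_surj]] x px.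
have [a pa <-] := c_surj x px.
have [->|a_neq0] := eqVneq a 0; first by exists 0; rewrite mulr0z !raddf0.
have [r [r_gt0 hr hr1]] := exists_exact_pexp pa a_neq0.
have cop : coprime (c r) (p ^ r).
  rewrite coprime_pexpr // coprime_sym prime_coprime //.
  apply: contraNN hr1 => /dvdnP [q cq]; apply/eqP.
  have ha1 : (a *+ p ^ r.-1) *+ p ^ r = 0.
    by rewrite -mulrnA mulnC mulrnA hr mul0rn.
  apply: c_inj; [by exists r | by exists 0%N; rewrite mulr1n | ].
  rewrite raddf0 (c_act _ _ ha1) cq -mulrnA pmulrn (mulrz_eq0_dvd hr) //.
  apply/dvdzP; exists q%:Z; rewrite -(prednK r_gt0) expnS /= !PoszM; ring.
have [u hu] := mulrn_coprime_inv cop hr.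
by exists u; rewrite (c_act _ _ hr) hu (c_act _ _ hr).
Qed.

End PowerEndomorphisms.

Lemma inertial_of_primary (A : zmodType) (phi : {additive A -> A}) :
  periodic A -> (forall p, prime p -> inertial_on (primary p) phi) ->
  cofinitely_many_primes (fun p => mult_on p phi) -> inertial phi.
Proof.
move=> hA phi_p cof X subX _; apply/fin_quot_sumg => //.
apply: (fin_quot_img_of_primary subX subX _ _ hA cof).
  move=> p x _ [c [_ c_act]] [k xk] Xx.
  by rewrite (c_act x k xk); apply: subgroupMn.
move=> p p_pr; have subXp := capg_subgroup subX (primary_subgroup A p).
have /fin_quot_sumg := phi_p p p_pr _ subXp (fun _ => @proj2 _ _).
by move=> /(_ subXp); apply: fin_quotS => // x [].
Qed.

Lemma left_inertial_of_primary (A : zmodType) (phi : {additive A -> A}) :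
  periodic A -> (forall p, prime p -> left_inertial_on (primary p) phi) ->
  cofinitely_many_primes (fun p => inv_mult_on p phi) -> left_inertial phi.
Proof.
move=> hA phi_p cof X subX _.
have subH := capg_subgroup subX (img_subgroup phi subX).
apply: fin_quotS (fun x Xx => ex_intro2 _ _ x Xx erefl) _
  (fin_quot_img_of_primary (F := idfun) subX subH _ _ hA cof) => //.
  move=> p x p_pr /(invertible_power_on_of_inv_mult p_pr) phi_inv px Xx.
  have [z hz] := phi_inv x px; split=> //.
  by exists (x *~ z); [apply: subgroupMz | rewrite hz].
move=> p p_pr; have subXp := capg_subgroup subX (primary_subgroup A p).
apply: fin_quotS (phi_p p p_pr _ subXp (fun _ => @proj2 _ _)).
  by move=> _ [x Xpx ->].
by move=> x [[Xx _] [y [Xy _] ex]]; split=> //; exists y.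
Qed.

Section PrimaryFamily.
Variables (A : zmodType) (a : nat -> A) (r : nat -> nat).

Fixpoint span_upto n : A -> Prop :=
  if n is m.+1 then fun x => exists k : int, span_upto m (x - a m *~ k)
  else fun x => x = 0.

Definition span x := exists n, span_upto n x.

Lemma span_upto_mono m n x : (m <= n)%N -> span_upto m x -> span_upto n x.
Proof.
elim: n => [|n IH]; first by rewrite leqn0 => /eqP ->.
rewrite leq_eqVlt => /predU1P [<- //|m_lt_n xm].
by exists 0; rewrite mulr0z subr0; apply: IH.
Qed.

Lemma span_upto_subgroup n : is_subgroup (span_upto n).
Proof.
elim: n => [|n IH]; first by split=> //= x y -> ->; rewrite subr0.
split; first by exists 0; rewrite mulr0z subr0; apply: subgroup0.
move=> x y [k1 h1] [k2 h2]; exists (k1 - k2).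
have -> : x - y - a n *~ (k1 - k2) = (x - a n *~ k1) - (y - a n *~ k2).
  by rewrite mulrzBr !opprB addrACA [RHS]addrACA [- y + _]addrC.
exact: subgroupB.
Qed.

Lemma span_subgroup : is_subgroup span.
Proof.
split; first by exists 0%N.
move=> x y [m xm] [n yn]; exists (maxn m n); apply: subgroupB.
- exact: span_upto_subgroup.
- exact: span_upto_mono (leq_maxl m n) xm.
- exact: span_upto_mono (leq_maxr m n) yn.
Qed.

Lemma mem_span i : span (a i).
Proof.
by exists i.+1, 1; rewrite mulr1z subrr; apply: subgroup0 (span_upto_subgroup i).
Qed.

Definition cofactor n i := (\prod_(0 <= l < n | l != i) l ^ r l)%N.

Lemma cofactorS n i :
  cofactor n.+1 i = (cofactor n i * (if n != i then n ^ r n else 1))%N.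
Proof. by rewrite /cofactor !(big_mkcond (fun l => l != i)) big_nat_recr. Qed.

Hypothesis a_order : forall l, a l *+ l ^ r l = 0.
Hypothesis r_prime : forall l, (0 < r l)%N -> prime l.

Lemma cofactor_coprime n i : prime i -> coprime (cofactor n i) i.
Proof.
move=> i_pr; apply: (big_ind (fun m => coprime m i)) => [|m1 m2|l l_ne_i].
- exact: coprime1n.
- by rewrite coprimeMl => -> ->.
have [->|r_gt0] := posnP (r l); first by rewrite expn0 coprime1n.
have l_pr := r_prime r_gt0.
by rewrite coprime_pexpl // prime_coprime // dvdn_prime2.
Qed.

Lemma cofactor_dvd n i j : (j < n)%N -> j != i -> (j ^ r j %| cofactor n i)%N.
Proof.
elim: n => // n IH; rewrite ltnS leq_eqVlt cofactorS => /predU1P [->|j_lt_n] j_ne_i.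
  by rewrite j_ne_i dvdn_mull.
by rewrite dvdn_mulr // IH.
Qed.

Lemma span_upto_cofactor n i y : span_upto n y ->
  exists k : int, y *+ cofactor n i = a i *~ k.
Proof.
elim: n y => [|n IH] y /=; first by move=> ->; exists 0; rewrite mul0rn mulr0z.
case=> k0 /IH [k hk]; rewrite cofactorS -[y](subrK (a n *~ k0)) mulrnDl.
case: ifP => [n_ne_i|/negbFE/eqP n_eq_i]; last first.
  subst i; exists (k + k0 * (cofactor n n)%:Z).
  by rewrite muln1 hk mulrzDr pmulrn -mulrzA.
have -> : (a n *~ k0) *+ (cofactor n i * n ^ r n) = 0.
  by rewrite mulnC mulrnA mulrz_mulrn_eq0 // mul0rn.
by exists (k * (n ^ r n)%N%:Z); rewrite addr0 mulrnA hk pmulrn -mulrzA.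
Qed.

Lemma span_projection i j y : prime i -> j != i -> span y ->
  exists M (k : int), [/\ coprime M (i ^ r i), a j *+ M = 0 & y *+ M = a i *~ k].
Proof.
move=> i_pr j_ne_i [n yn].
have [k hk] := span_upto_cofactor i (span_upto_mono (leq_maxl n j.+1) yn).
exists (cofactor (maxn n j.+1) i), k; split=> //.
  by apply: coprimeXr; apply: cofactor_coprime.
by apply: mulrn_eq0_dvd (a_order j) (cofactor_dvd _ j_ne_i); rewrite leq_maxr.
Qed.

End PrimaryFamily.

Lemma primary_family (A : zmodType) (Bad : nat -> A -> Prop) :
  exists (a : nat -> A) (r : nat -> nat), forall p,
    [/\ a p *+ p ^ r p = 0, (0 < r p)%N -> prime p
      & prime p -> (exists2 x, primary p x & Bad p x) -> Bad p (a p)].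
Proof.
have pick p : exists xk : A * nat,
    [/\ xk.1 *+ p ^ xk.2 = 0, (0 < xk.2)%N -> prime p
      & prime p -> (exists2 x, primary p x & Bad p x) -> Bad p xk.1].
  have [[p_pr [x [k xk] bad]]|none] :=
    classic (prime p /\ exists2 x, primary p x & Bad p x).
    by exists (x, k).
  exists (0, 0%N); split=> //=.
  by move=> p_pr bad; case: none.
have [f hf] := choice _ pick.
by exists (fun p => (f p).1), (fun p => (f p).2).
Qed.

Lemma infinite_pigeonhole (P : nat -> Prop) (f : nat -> nat) N :
  (forall s : seq nat, exists2 p, P p & p \notin s) ->
  (forall p, P p -> (f p < N)%N) -> exists i j, [/\ P i, P j, i != j & f i = f j].
Proof.
move=> P_inf f_lt; apply: NNPP => f_inj.
have lists k : exists l : seq nat,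
    [/\ size l = k, uniq (map f l) & forall p, p \in l -> P p].
  elim: k => [|k [l [l_size l_uniq lP]]]; first by exists [::].
  have [p Pp p_nin] := P_inf l.
  exists (p :: l); split=> /=; first by rewrite l_size.
    rewrite l_uniq andbT; apply/mapP => [[q ql fpq]]; apply: f_inj.
    by exists p, q; split=> //; [exact: lP | apply: contraNneq p_nin => ->].
  by move=> q /predU1P [->|/lP].
have [l [l_size l_uniq lP]] := lists N.+1.
have : (size (map f l) <= size (iota 0 N))%N.
  apply: uniq_leq_size l_uniq _ => _ /mapP [q ql ->].
  by rewrite mem_iota /= f_lt //; apply: lP.
by rewrite size_map size_iota l_size ltnn.
Qed.

Lemma fin_quot_collision (A : zmodType) (K H : A -> Prop) (P : nat -> Prop)
    (z : nat -> A) :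
  is_subgroup H -> (forall s : seq nat, exists2 p, P p & p \notin s) ->
  (forall p, P p -> K (z p)) -> fin_quot K H ->
  exists i j, [/\ P i, P j, i != j & H (z i - z j)].
Proof.
move=> subH P_inf Kz [s0 hs0].
have pick p : exists y, P p -> y \in s0 /\ H (z p - y).
  have [Pp|nP] := classic (P p); last by exists 0.
  by have [y ys hyp] := hs0 _ (Kz p Pp); exists y.
have [y hy] := choice _ pick.
have [|i [j [Pi Pj i_ne_j eq_idx]]] :=
  infinite_pigeonhole (f := fun p => index (y p) s0) (N := size s0) P_inf.
  by move=> p Pp; rewrite index_mem; case: (hy p Pp).
exists i, j; split=> //.
have eq_y : y i = y j.
  by rewrite -(nth_index 0 (hy i Pi).1) eq_idx nth_index //; case: (hy j Pj).
have -> : z i - z j = (z i - y i) - (z j - y j) by rewrite eq_y opprB addrA subrK.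
by apply: subgroupB => //; [case: (hy i Pi) | case: (hy j Pj)].
Qed.

Lemma not_cofinitely_many_primes (Q : nat -> Prop) :
  ~ cofinitely_many_primes Q ->
  forall s : seq nat, exists2 p, prime p /\ ~ Q p & p \notin s.
Proof.
move=> not_cof s; apply: NNPP => none; apply: not_cof; exists s => p p_pr p_nin.
by apply: NNPP => nQ; apply: none; exists p.
Qed.

Lemma cofinitely_many_primesW (Q Q' : nat -> Prop) :
  (forall p, prime p -> Q p -> Q' p) ->
  cofinitely_many_primes Q -> cofinitely_many_primes Q'.
Proof. by move=> QQ' [s hs]; exists s => p p_pr p_nin; apply/QQ'/hs. Qed.

Lemma power_on_cofinitely_of_inertial (A : zmodType) (phi : {additive A -> A}) :
  inertial phi -> cofinitely_many_primes (fun p => power_on p phi).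
Proof.
move=> phi_in; apply: NNPP => /not_cofinitely_many_primes bad_inf.
have [a [r har]] := primary_family (fun p x => forall z : int, phi x <> x *~ z).
have a_ord p : a p *+ p ^ r p = 0 by case: (har p).
have r_pr p : (0 < r p)%N -> prime p by case: (har p).
have a_bad p : prime p -> ~ power_on p phi -> forall z : int, phi (a p) <> a p *~ z.
  move=> p_pr np; case: (har p) => _ _; apply=> //.
  apply: NNPP => none; apply: np => x px.
  by apply: NNPP => nz; apply: none; exists x => // z ez; apply: nz; exists z.
have subX := span_subgroup a.
have [i [j [[i_pr i_bad] _ i_ne_j X_ij]]] :=
  fin_quot_collision (z := fun p => phi (a p)) subX bad_inf
    (fun p _ => ex_intro2 _ _ (a p) (mem_span a p) erefl)
    ((fin_quot_sumg _ subX).1 (phi_in _ subX (fun _ _ => I))).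
have j_ne_i : j != i by rewrite eq_sym.
have [M [k [cop ajM hM]]] := span_projection a_ord r_pr i_pr j_ne_i X_ij.
rewrite mulrnBl -[phi (a j) *+ M]raddfMn ajM raddf0 subr0 in hM.
have phi_ai : phi (a i) *+ i ^ r i = 0 by rewrite -raddfMn a_ord raddf0.
have [u hu] := mulrn_coprime_inv cop phi_ai.
by apply: (a_bad i i_pr i_bad (k * u)); rewrite -hu hM mulrzA.
Qed.

Lemma invertible_power_on_cofinitely_of_left_inertial (A : zmodType)
    (phi : {additive A -> A}) :
  left_inertial phi -> cofinitely_many_primes (fun p => invertible_power_on p phi).
Proof.
move=> phi_in; apply: NNPP => /not_cofinitely_many_primes bad_inf.
have [a [r har]] := primary_family (fun p x => forall z : int, phi (x *~ z) <> x).
have a_ord p : a p *+ p ^ r p = 0 by case: (har p).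
have r_pr p : (0 < r p)%N -> prime p by case: (har p).
have a_bad p : prime p -> ~ invertible_power_on p phi ->
    forall z : int, phi (a p *~ z) <> a p.
  move=> p_pr np; case: (har p) => _ _; apply=> //.
  apply: NNPP => none; apply: np => x px.
  by apply: NNPP => nz; apply: none; exists x => // z ez; apply: nz; exists z.
have subX := span_subgroup a.
have subH := capg_subgroup subX (img_subgroup phi subX).
have [i [j [[i_pr i_bad] _ i_ne_j [_ [x Xx ex]]]]] :=
  fin_quot_collision (z := a) subH bad_inf (fun p _ => mem_span a p)
    (phi_in _ subX (fun _ _ => I)).
have j_ne_i : j != i by rewrite eq_sym.
have [M [k [cop ajM hM]]] := span_projection a_ord r_pr i_pr j_ne_i Xx.
have aiM : a i *+ M = phi (a i *~ k) by rewrite -hM raddfMn -ex mulrnBl ajM subr0.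
have [u hu] := mulrn_coprime_inv cop (a_ord i).
by apply: (a_bad i i_pr i_bad (k * u)); rewrite mulrzA raddfMz -aiM hu.
Qed.

Theorem proposition3p2 (A : zmodType) (hA : periodic A) (phi : {additive A -> A}) :
  (inertial phi <->
     (forall p, prime p -> inertial_on (primary p) phi) /\
     cofinitely_many_primes (fun p => mult_on p phi)) /\
  (left_inertial phi <->
     (forall p, prime p -> left_inertial_on (primary p) phi) /\
     cofinitely_many_primes (fun p => inv_mult_on p phi)).
Proof.
split; split=> [phi_in|[phi_p cof]].
- split; first by move=> p _ X subX _; apply: phi_in.
  apply: cofinitely_many_primesW (power_on_cofinitely_of_inertial phi_in).
  by move=> p p_pr phi_pow; exact (mult_on_of_power_on p_pr phi_pow).
- exact: inertial_of_primary.
- split; first by move=> p _ X subX _; apply: phi_in.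
  apply: cofinitely_many_primesW
    (invertible_power_on_cofinitely_of_left_inertial phi_in).
  by move=> p p_pr phi_inv; exact (inv_mult_on_of_invertible_power_on p_pr phi_inv).
- exact: left_inertial_of_primary.
Qed.
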